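(* Consider the processes $x^{ji}$ ($i\in[n]$, $j\in\mathcal N_i$) and $y^i$ ($i\in[n]$) defined by the stochastic differential equations (SDE-x) and (SDE-y) in the context, for an arbitrary initially infected set $\Lambda\subset[n]$. Then for all $i\in[n]$, $j\in\mathcal N_i$ and $t\ge0$: (1) $\mathbb{1}_p^\top x^{ji}(t)=\mathbb{1}_q^\top y^i(t)$; (2) $x^{ji}(t)\in\{0_p,e_1,\dots,e_p\}$; (3) $y^i(t)\in\{0_q,f_1,\dots,f_q\}$.
   Context: Notation: $[n]=\{1,\dots,n\}$; $\mathbb{1}_p$ all-ones vector in $\mathbb{R}^p$, $0_p$ zero vector; $E_{mm'}$ ($m,m'\in[p]$) the $p\times p$ matrix with a single $1$ at $(m,m')$, $e_m$ the $m$-th canonical basis vector of $\mathbb{R}^p$; $F_{\ell\ell'}$ ($\ell,\ell'\in[q]$) the $q\times q$ matrix with a single $1$ at $(\ell,\ell')$, $f_\ell$ the $\ell$-th canonical basis vector of $\mathbb{R}^q$. For a probability vector $\phi$ on $[p]$, $x\sim\phi$ means $P(x=e_m)=\phi_m$ (similarly for $\psi$ on $[q]$ with $f_\ell$). Parameters: $T\in\mathbb{R}^{p\times p}$ and $R\in\mathbb{R}^{q\times q}$ are invertible Metzler matrices (nonnegative off-diagonal entries) with non-positive row sums; $\phi,\psi$ probability vectors on $[p]$, $[q]$; $b=-T\mathbb{1}_p$, $d=-R\mathbb{1}_q$. $\mathcal G=([n],\mathcal E)$ is an undirected graph with adjacency matrix $A=[a_{ij}]$ and neighbor sets $\mathcal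 N_i$, each node having at least one neighbor. Randomness: $N^{ji}_\lambda$, $N^i_\lambda$ are mutually independent Poisson counters of rate $\lambda\ge0$; $e^{ji}_\phi(t)\sim\phi$ and $f^i_\psi(t)\sim\psi$ are independent across $t$, indices, and of the counters. Solutions of jump SDEs: processes are right-continuous, constant on intervals in which no counter jumps, and when a counter jumps at $t$ the state changes to (state at $t^-$) plus the corresponding coefficient evaluated at the state at $t^-$ and the auxiliary processes at $t$. (SDE-x): $dx^{ji}=\sum_{m\neq m'}(E_{m'm}-E_{mm})x^{ji}\,dN^{ji}_{T_{mm'}}+\sum_{m=1}^p(e^{ji}_\phi e_m^\top-E_{mm})x^{ji}\,dN^{ji}_{b_m}-x^{ji}\sum_{\ell=1}^q y^i_\ell\,dN^i_{d_\ell}+e^{ji}_\phi(1-\mathbb{1}_q^\top y^i)\sum_{k=1}^n a_{ik}\sum_{m=1}^p x^{ik}_m\,dN^{ik}_{b_m}$. (SDE-y): $dy^i=\sum_{\ell\neq\ell'}(F_{\ell'\ell}-F_{\ell\ell})y^i\,dN^i_{R_{\ell\ell'}}-y^i\sum_{\ell=1}^q y^i_\ell\,dN^i_{d_\ell}+f^i_\psi(1-\mathbb{1}_q^\top y^i)\sum_{k=1}^n a_{ik}\sum_{m=1}^p x^{ik}_m\,dN^{ik}_{b_m}$. Initial conditions: for $i\in\Lambda$, $x^{ji}(0)\sim\phi$ and $y^i(0)\sim\psi$; for $i\notin\Lambda$, $x^{ji}(0)=0_p$, $y^i(0)=0_q$. *)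

From mathcomp Require Import all_boot all_order all_algebra.
From mathcomp Require Import reals.
Set Implicit Arguments. Unset Strict Implicit. Unset Printing Implicit Defensive.
Import Order.TTheory GRing.Theory Num.Theory.
Local Open Scope ring_scope.

(* CT j i m m'  ==  N^{ji}_{T_{mm'}}     (used for m <> m')
   CB j i m     ==  N^{ji}_{b_m}
   CD i l       ==  N^{i}_{d_l}
   CR i l l'    ==  N^{i}_{R_{l l'}}     (used for l <> l')               *)
Inductive counter (n p q : nat) : Type :=
| CT of 'I_n & 'I_n & 'I_p & 'I_p
| CB of 'I_n & 'I_n & 'I_p
| CD of 'I_n & 'I_q
| CR of 'I_n & 'I_q & 'I_q.
Arguments CT {n p q}. Arguments CB {n p q}.
Arguments CD {n p q}. Arguments CR {n p q}.

Section Defs.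
Variable R : realType.

Definition metzler k (M : 'M[R]_k) := forall a b : 'I_k, a != b -> 0 <= M a b.
Definition nonpos_rowsums k (M : 'M[R]_k) := forall a : 'I_k, \sum_(b < k) M a b <= 0.
Definition prob_vec k (v : 'I_k -> R) := (forall a, 0 <= v a) /\ \sum_(a < k) v a = 1.

(* b = - T 1_p , d = - R 1_q *)
Definition exit_rate k (M : 'M[R]_k) (a : 'I_k) : R := - \sum_(b < k) M a b.

Definition evec k (a : 'I_k) : 'cV[R]_k := delta_mx a 0.
Definition ones_dot k (x : 'cV[R]_k) : R := ((const_mx 1 : 'cV[R]_k)^T *m x) 0 0.

Definition rate n p q (T : 'M[R]_p) (Rq : 'M[R]_q) (c : counter n p q) : R :=
  match c with
  | CT _ _ m m' => T m m'
  | CB _ _ m => exit_rate T m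
  | CD _ l => exit_rate Rq l
  | CR _ l l' => Rq l l'
  end.

Definition left_value V (X : R -> V) (t : R) (v : V) :=
  exists2 eps : R, 0 < eps & forall s, t - eps < s < t -> X s = v.

(* right-continuous nondecreasing counting path starting at 0 with unit jumps;
   Nm t is its left limit N(t^-) *)
Definition counting_path (N Nm : R -> nat) :=
  [/\ N 0 = 0%N,
      (forall s t, 0 <= s -> s <= t -> (N s <= N t)%N),
      (forall t, 0 <= t -> exists2 eps : R, 0 < eps &
                   forall s, t <= s < t + eps -> N s = N t) &
      (forall t, 0 < t -> left_value N t (Nm t) /\ (N t <= (Nm t).+1)%N)].

(* Sample-path properties of a family of Poisson counters with the given rates:
   counting paths, rate-0 counters never jump, and (the probability-one event
   for independent Poisson counters) no two distinct counters jump together. *)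
Definition poisson_paths n p q (T : 'M[R]_p) (Rq : 'M[R]_q)
    (N Nm : counter n p q -> R -> nat) :=
  [/\ (forall c, counting_path (N c) (Nm c)),
      (forall c, rate T Rq c = 0 -> forall t, 0 <= t -> N c t = 0%N) &
      (forall c c' t, 0 < t -> N c t <> Nm c t -> N c' t <> Nm c' t -> c = c')].

Definition dN n p q (N Nm : counter n p q -> R -> nat) c t : R :=
  (N c t)%:R - (Nm c t)%:R.

Definition pc_process n p q (N Nm : counter n p q -> R -> nat) V
    (Z Zm : R -> V) :=
  [/\ (forall t, 0 <= t -> exists2 eps : R, 0 < eps &
                 forall s, t <= s < t + eps -> Z s = Z t),
      (forall a b, 0 <= a -> a <= b ->
         (forall c s, a < s <= b -> N c s = Nm c s) ->
         forall s, a <= s <= b -> Z s = Z a) &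
      (forall t, 0 < t -> left_value Z t (Zm t))].

Section Jumps.
Variables (n p q : nat) (adj : rel 'I_n) (N Nm : counter n p q -> R -> nat).
Variables (xm : 'I_n -> 'I_n -> R -> 'cV[R]_p) (ym : 'I_n -> R -> 'cV[R]_q).
Variables (e : 'I_n -> 'I_n -> R -> 'cV[R]_p) (f : 'I_n -> R -> 'cV[R]_q).

Local Notation dN := (dN N Nm).

Definition infection_term (i : 'I_n) (t : R) : R :=
  \sum_(k < n) (adj i k)%:R *
     \sum_(m < p) xm i k t m 0 * dN (CB i k m) t.

Definition jump_x (j i : 'I_n) (t : R) : 'cV[R]_p :=
    \sum_(m < p) \sum_(m' < p | m != m')
        dN (CT j i m m') t *: ((delta_mx m' m - delta_mx m m) *m xm j i t)
  + \sum_(m < p)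
        dN (CB j i m) t *: ((e j i t *m (evec m)^T - delta_mx m m) *m xm j i t)
  - (\sum_(l < q) ym i t l 0 * dN (CD i l) t) *: xm j i t
  + ((1 - ones_dot (ym i t)) * infection_term i t) *: e j i t.

Definition jump_y (i : 'I_n) (t : R) : 'cV[R]_q :=
    \sum_(l < q) \sum_(l' < q | l != l')
        dN (CR i l l') t *: ((delta_mx l' l - delta_mx l l) *m ym i t)
  - (\sum_(l < q) ym i t l 0 * dN (CD i l) t) *: ym i t
  + ((1 - ones_dot (ym i t)) * infection_term i t) *: f i t.
End Jumps.

(* (x, y) with left limits (xm, ym) solve (SDE-x),(SDE-y) along the given
   counter paths and auxiliary paths e = e^{ji}_phi, f = f^i_psi *)
Definition is_solution n p q (adj : rel 'I_n) (N Nm : counter n p q -> R -> nat)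
    (x xm : 'I_n -> 'I_n -> R -> 'cV[R]_p) (y ym : 'I_n -> R -> 'cV[R]_q)
    (e : 'I_n -> 'I_n -> R -> 'cV[R]_p) (f : 'I_n -> R -> 'cV[R]_q) :=
  [/\ (forall i j, adj i j -> pc_process N Nm (x j i) (xm j i)),
      (forall i, pc_process N Nm (y i) (ym i)),
      (forall i j t, adj i j -> 0 < t ->
          x j i t = xm j i t + jump_x adj N Nm xm ym e j i t) &
      (forall i t, 0 < t -> y i t = ym i t + jump_y adj N Nm xm ym f i t)].

End Defs.

From HB Require Import structures.
From mathcomp Require Import all_boot all_order all_algebra.
From mathcomp Require Import boolp classical_sets reals.
From mathcomp Require Import lra.
Import Order.TTheory GRing.Theory Num.Theory.
Set Implicit Arguments. Unset Strict Implicit. Unset Printing Implicit Defensive.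
Local Open Scope ring_scope.

(* Between jumps of the Poisson counters all x^{ji} and y^i are constant, and at
   each time at most one counter jumps, by one.  Call a state consistent when
   every y^i and x^{ji} is 0 or a canonical basis vector and 1^T x^{ji} = 1^T y^i.
   A single jump keeps the state consistent: a phase change moves a basis vector
   to another one, a recovery of node i (counter N^i_{d_l}, effective only when
   y^i = f_l) resets y^i together with every x^{ji}, and a jump of N^{ik}_{b_m}
   restarts x^{ik} and, if node i is healthy (y^i = 0, hence every x^{ji} = 0),
   switches on y^i and every x^{ji} at once.  Consistency at time 0 propagates
   to all t >= 0 by an induction over [0, oo) on the supremum of the initial
   interval where it holds. *)

Section UnitVectors.
Variable R : realType.

Definition evec_or0 k (v : 'cV[R]_k) := v = 0 \/ exists m, v = evec R m.

Lemma ones_dotE k (v : 'cV[R]_k) : ones_dot v = \sum_(a < k) v a 0.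
Proof. by rewrite /ones_dot !mxE; apply: eq_bigr => a _; rewrite !mxE mul1r. Qed.

Lemma ones_dotD k (u v : 'cV[R]_k) : ones_dot (u + v) = ones_dot u + ones_dot v.
Proof. by rewrite !ones_dotE -big_split; apply: eq_bigr => a _; rewrite mxE. Qed.

Lemma ones_dotZ k c (v : 'cV[R]_k) : ones_dot (c *: v) = c * ones_dot v.
Proof. by rewrite !ones_dotE mulr_sumr; apply: eq_bigr => a _; rewrite mxE. Qed.

Lemma ones_dot0 k : ones_dot (0 : 'cV[R]_k) = 0.
Proof. by rewrite -(scale0r 0) ones_dotZ mul0r. Qed.

Lemma evecE k (m a : 'I_k) : evec R m a 0 = (a == m)%:R.
Proof. by rewrite mxE eqxx andbT. Qed.

Lemma ones_dot_evec k (m : 'I_k) : ones_dot (evec R m) = 1.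
Proof.
rewrite ones_dotE (bigD1 m) //= evecE eqxx big1 ?addr0 // => a /negbTE am.
by rewrite evecE am.
Qed.

Lemma evec_or0_ones_dot k (v : 'cV[R]_k) :
  evec_or0 v -> ones_dot v = 0 \/ ones_dot v = 1.
Proof. by case=> [->|[m ->]]; [left; exact: ones_dot0 | right; exact: ones_dot_evec].
Qed.

Lemma evec_or0_ones_dot0 k (v : 'cV[R]_k) : evec_or0 v -> ones_dot v = 0 -> v = 0.
Proof. by case=> // -[m ->]; rewrite ones_dot_evec => /eqP; rewrite oner_eq0. Qed.

Lemma evec_or0_entry k (v : 'cV[R]_k) a : evec_or0 v -> v a 0 = 0 \/ v a 0 = 1.
Proof.
case=> [->|[m ->]]; first by left; rewrite mxE.
by rewrite evecE; case: (a == m); [right|left].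
Qed.

Lemma scale_natb_diff k (b : bool) (u w : 'cV[R]_k) :
  u + b%:R *: (w - u) = if b then w else u.
Proof. by case: b; rewrite ?scale1r ?scale0r ?addr0 // addrC subrK. Qed.

Lemma mul_move_evec k (a b m : 'I_k) :
  (delta_mx a b - delta_mx b b) *m evec R m = (b == m)%:R *: (evec R a - evec R m).
Proof.
rewrite mulmxBl /evec !mul_delta_mx_cond.
by case: eqP => [->|_]; rewrite ?scale1r ?scale0r ?mulr1n ?mulr0n ?subrr.
Qed.

Lemma mul_restart_evec k (u : 'cV[R]_k) (a m : 'I_k) :
  (u *m (evec R a)^T - delta_mx a a) *m evec R m = (a == m)%:R *: (u - evec R m).
Proof.
rewrite mulmxBl -mulmxA /evec trmx_delta !mul_delta_mx_cond.
case: eqP => [->|_]; last by rewrite mulmx0 subrr scale0r.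
by rewrite [delta_mx 0 0]mx11_scalar mxE mul_mx_scalar !scale1r.
Qed.

Lemma evec_or0_move k (c : bool) (a b : 'I_k) (v : 'cV[R]_k) :
  evec_or0 v ->
  evec_or0 (v + c%:R *: ((delta_mx a b - delta_mx b b) *m v)) /\
  ones_dot (v + c%:R *: ((delta_mx a b - delta_mx b b) *m v)) = ones_dot v.
Proof.
case=> [->|[m ->]]; first by rewrite mulmx0 scaler0 addr0; split=> //; left.
rewrite mul_move_evec scalerA -natrM mulnb scale_natb_diff.
by case: ifP => _; rewrite !ones_dot_evec; split=> //; right; eexists.
Qed.

Lemma evec_or0_restart k (c : bool) (a l : 'I_k) (v : 'cV[R]_k) :
  evec_or0 v ->
  evec_or0 (v + c%:R *: ((evec R l *m (evec R a)^T - delta_mx a a) *m v)) /\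
  ones_dot (v + c%:R *: ((evec R l *m (evec R a)^T - delta_mx a a) *m v)) =
    ones_dot v.
Proof.
case=> [->|[m ->]]; first by rewrite mulmx0 scaler0 addr0; split=> //; left.
rewrite mul_restart_evec scalerA -natrM mulnb scale_natb_diff.
by case: ifP => _; rewrite !ones_dot_evec; split=> //; right; eexists.
Qed.

Lemma evec_or0_clear k (g : R) (v : 'cV[R]_k) :
  g = 0 \/ g = 1 -> evec_or0 v -> evec_or0 (v - g *: v).
Proof. by case=> ->; rewrite ?scale0r ?subr0 ?scale1r ?subrr //; left. Qed.

(* [u], [v] play x^{ji}, y^i: the factor [1 - ones_dot v] lets the infection
   switch them on only when both are 0. *)
Lemma evec_or0_infect k k' (c : R) (u u' : 'cV[R]_k) (v v' : 'cV[R]_k') :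
  c = 0 \/ c = 1 -> evec_or0 u -> evec_or0 v -> ones_dot u = ones_dot v ->
  (exists m, u' = evec R m) -> (exists l, v' = evec R l) ->
  evec_or0 (u + ((1 - ones_dot v) * c) *: u') /\
  ones_dot (u + ((1 - ones_dot v) * c) *: u') =
  ones_dot (v + ((1 - ones_dot v) * c) *: v').
Proof.
move=> hc hu hv huv [m ->] [l ->]; have [v0|v1] := evec_or0_ones_dot hv.
  rewrite (evec_or0_ones_dot0 hu) ?huv // (evec_or0_ones_dot0 hv v0) ones_dot0.
  rewrite subr0 mul1r !add0r !ones_dotZ !ones_dot_evec; split=> //.
  by case: hc => ->; [left; rewrite scale0r | right; exists m; rewrite scale1r].
by rewrite v1 subrr mul0r !scale0r !addr0 huv v1.
Qed.

Lemma natb_mul_bit (b : bool) (g : R) :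
  g = 0 \/ g = 1 -> b%:R * g = 0 \/ b%:R * g = 1.
Proof. by case: b; rewrite ?mul0r ?mul1r //; left. Qed.

Lemma sum_indicator (V : lmodType R) k (P : pred 'I_k) (F : 'I_k -> V) a :
  \sum_(i < k | P i) (i == a)%:R *: F i = (P a)%:R *: F a.
Proof.
rewrite big_mkcond (bigD1 a) //= eqxx scale1r.
rewrite big1 ?addr0 => [|i /negbTE ->]; last by rewrite scale0r if_same.
by case: (P a); rewrite ?scale1r ?scale0r.
Qed.

Lemma sum_indicator_pair (V : lmodType R) k (F : 'I_k -> 'I_k -> V) a b :
  \sum_(i < k) \sum_(j < k | i != j) ((i == a) && (j == b))%:R *: F i j
  = (a != b)%:R *: F a b.
Proof.
rewrite (bigD1 a) //= [X in _ + X]big1 ?addr0 => [|i /negbTE ia]; last first.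
  by rewrite big1 // => j _; rewrite ia scale0r.
under eq_bigr do rewrite eqxx.
exact: (sum_indicator (fun j => a != j)).
Qed.

Lemma sum_indicator_scalar k (F : 'I_k -> R) a :
  \sum_(i < k) (i == a)%:R * F i = F a.
Proof.
rewrite (bigD1 a) //= eqxx mul1r big1 ?addr0 // => i /negbTE ->.
by rewrite mul0r.
Qed.

Lemma sum_mul_indicator k (F : 'I_k -> R) c a :
  \sum_(i < k) F i * (c * (i == a)%:R) = c * F a.
Proof.
under eq_bigr do rewrite mulrCA (mulrC (F _)).
by rewrite -mulr_sumr sum_indicator_scalar.
Qed.

End UnitVectors.

Section CounterFinType.
Variables n p q : nat.

Definition counter_code (c : counter n p q) :=
  match c with
  | CT j i m m' => inl (inl (inl (j, i, m, m')))
  | CB j i m => inl (inl (inr (j, i, m)))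
  | CD i l => inl (inr (i, l))
  | CR i l l' => inr (i, l, l')
  end.

Definition counter_decode
    (s : 'I_n * 'I_n * 'I_p * 'I_p + 'I_n * 'I_n * 'I_p + 'I_n * 'I_q
         + 'I_n * 'I_q * 'I_q) : counter n p q :=
  match s with
  | inl (inl (inl (j, i, m, m'))) => CT j i m m'
  | inl (inl (inr (j, i, m))) => CB j i m
  | inl (inr (i, l)) => CD i l
  | inr (i, l, l') => CR i l l'
  end.

Lemma counter_codeK : cancel counter_code counter_decode.
Proof. by case. Qed.

End CounterFinType.

HB.instance Definition _ n p q :=
  Finite.copy (counter n p q) (can_type (@counter_codeK n p q)).

Definition consistent_state (R : realType) n p q (adj : rel 'I_n)
    (X : 'I_n -> 'I_n -> 'cV[R]_p) (Y : 'I_n -> 'cV[R]_q) :=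
  (forall i, evec_or0 (Y i)) /\
  (forall i j, adj i j -> evec_or0 (X j i) /\ ones_dot (X j i) = ones_dot (Y i)).

Section SingleJump.
Variables (R : realType) (n p q : nat) (adj : rel 'I_n).
Variables (N Nm : counter n p q -> R -> nat).
Variables (xm : 'I_n -> 'I_n -> R -> 'cV[R]_p) (ym : 'I_n -> R -> 'cV[R]_q).
Variables (e : 'I_n -> 'I_n -> R -> 'cV[R]_p) (f : 'I_n -> R -> 'cV[R]_q).
Variables (t : R) (c0 : option (counter n p q)).
(* [c0 = None]: no counter jumps at [t]; [c0 = Some c]: only [c] jumps, by one. *)
Hypothesis dN_single : forall c, dN N Nm c t = (Some c == c0)%:R.

Local Notation D c := (dN N Nm c t).

Lemma dN_single_CT j i m m' : D (CT j i m m') =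
  if c0 is Some (CT a b m0 m0') then
    ((j == a) && (i == b))%:R * ((m == m0) && (m' == m0'))%:R
  else 0.
Proof.
rewrite dN_single; case: c0 => [[a b m0 m0'|||]|] //.
rewrite -natrM mulnb (_ : _ == _ = ((j, i, m, m') == (a, b, m0, m0'))) //.
by rewrite !xpair_eqE -!andbA.
Qed.

Lemma dN_single_CB j i m : D (CB j i m) =
  if c0 is Some (CB a b m0) then ((j == a) && (i == b))%:R * (m == m0)%:R else 0.
Proof.
rewrite dN_single; case: c0 => [[|a b m0||]|] //.
by rewrite -natrM mulnb (_ : _ == _ = ((j, i, m) == (a, b, m0))) // !xpair_eqE.
Qed.

Lemma dN_single_CD i l : D (CD i l) =
  if c0 is Some (CD a l0) then (i == a)%:R * (l == l0)%:R else 0.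
Proof.
rewrite dN_single; case: c0 => [[||a l0|]|] //.
by rewrite -natrM mulnb (_ : _ == _ = ((i, l) == (a, l0))) // !xpair_eqE.
Qed.

Lemma dN_single_CR i l l' : D (CR i l l') =
  if c0 is Some (CR a l0 l0') then (i == a)%:R * ((l == l0) && (l' == l0'))%:R
  else 0.
Proof.
rewrite dN_single; case: c0 => [[|||a l0 l0']|] //.
rewrite -natrM mulnb (_ : _ == _ = ((i, l, l') == (a, l0, l0'))) //.
by rewrite !xpair_eqE -!andbA.
Qed.

Lemma phase_sum_x_single (V : lmodType R) j i (F : 'I_p -> 'I_p -> V) :
  \sum_(m < p) \sum_(m' < p | m != m') D (CT j i m m') *: F m m' =
  if c0 is Some (CT a b m0 m0') then
    ((j == a) && (i == b) && (m0 != m0'))%:R *: F m0 m0'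
  else 0.
Proof.
under eq_bigr do under eq_bigr do rewrite dN_single_CT.
case: c0 => [[a b m0 m0'|||]|] /=; try by
  rewrite big1 // => m _; rewrite big1 // => m' _; rewrite scale0r.
under eq_bigr do under eq_bigr do rewrite -scalerA.
under eq_bigr do rewrite -scaler_sumr.
by rewrite -scaler_sumr sum_indicator_pair scalerA -natrM mulnb.
Qed.

Lemma phase_sum_y_single (V : lmodType R) i (F : 'I_q -> 'I_q -> V) :
  \sum_(l < q) \sum_(l' < q | l != l') D (CR i l l') *: F l l' =
  if c0 is Some (CR a l0 l0') then ((i == a) && (l0 != l0'))%:R *: F l0 l0'
  else 0.
Proof.
under eq_bigr do under eq_bigr do rewrite dN_single_CR.
case: c0 => [[|||a l0 l0']|] /=; try by
  rewrite big1 // => l _; rewrite big1 // => l' _; rewrite scale0r.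
under eq_bigr do under eq_bigr do rewrite -scalerA.
under eq_bigr do rewrite -scaler_sumr.
by rewrite -scaler_sumr sum_indicator_pair scalerA -natrM mulnb.
Qed.

Lemma restart_sum_single (V : lmodType R) j i (F : 'I_p -> V) :
  \sum_(m < p) D (CB j i m) *: F m =
  if c0 is Some (CB a b m0) then ((j == a) && (i == b))%:R *: F m0 else 0.
Proof.
under eq_bigr do rewrite dN_single_CB.
case: c0 => [[|a b m0||]|] /=; try by rewrite big1 // => m _; rewrite scale0r.
under eq_bigr do rewrite -scalerA.
by rewrite -scaler_sumr (sum_indicator xpredT) scale1r.
Qed.

Lemma recovery_sum_single i (F : 'I_q -> R) :
  \sum_(l < q) F l * D (CD i l) =
  if c0 is Some (CD a l0) then (i == a)%:R * F l0 else 0.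
Proof.
under eq_bigr do rewrite dN_single_CD.
case: c0 => [[||a l0|]|] /=; try by rewrite big1 // => l _; rewrite mulr0.
exact: sum_mul_indicator.
Qed.

Lemma infection_term_single i : infection_term adj N Nm xm i t =
  if c0 is Some (CB a b m0) then (i == a)%:R * ((adj a b)%:R * xm a b t m0 0)
  else 0.
Proof.
rewrite /infection_term; under eq_bigr do under eq_bigr do rewrite dN_single_CB.
case: c0 => [[|a b m0||]|] /=; try by
  rewrite big1 // => k _; rewrite big1 ?mulr0 // => m _; rewrite mulr0.
under eq_bigr do rewrite sum_mul_indicator.
have [->|ia] := eqVneq i a; last first.
  by rewrite mul0r big1 // => k _; rewrite mul0r mulr0.
under eq_bigr do rewrite /= mulrCA.
by rewrite sum_indicator_scalar mul1r.
Qed.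

Lemma jump_y_single i : ym i t + jump_y adj N Nm xm ym f i t =
  match c0 with
  | Some (CB a b m0) => ym i t +
      ((1 - ones_dot (ym i t)) * ((i == a)%:R * ((adj a b)%:R * xm a b t m0 0)))
        *: f i t
  | Some (CD a l0) => ym i t - ((i == a)%:R * ym i t l0 0) *: ym i t
  | Some (CR a l0 l0') => ym i t +
      ((i == a) && (l0 != l0'))%:R *: ((delta_mx l0' l0 - delta_mx l0 l0) *m ym i t)
  | _ => ym i t
  end.
Proof.
rewrite /jump_y phase_sum_y_single recovery_sum_single infection_term_single.
by case: c0 => [[a b m0 m0'|a b m0|a l0|a l0 l0']|] /=;
  rewrite ?mulr0 ?scale0r ?subr0 ?addr0 ?add0r.
Qed.

Lemma jump_x_single j i : xm j i t + jump_x adj N Nm xm ym e j i t =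
  match c0 with
  | Some (CT a b m0 m0') => xm j i t + ((j == a) && (i == b) && (m0 != m0'))%:R *:
      ((delta_mx m0' m0 - delta_mx m0 m0) *m xm j i t)
  | Some (CB a b m0) => xm j i t + ((j == a) && (i == b))%:R *:
      ((e j i t *m (evec R m0)^T - delta_mx m0 m0) *m xm j i t) +
      ((1 - ones_dot (ym i t)) * ((i == a)%:R * ((adj a b)%:R * xm a b t m0 0)))
        *: e j i t
  | Some (CD a l0) => xm j i t - ((i == a)%:R * ym i t l0 0) *: xm j i t
  | _ => xm j i t
  end.
Proof.
rewrite /jump_x phase_sum_x_single restart_sum_single recovery_sum_single.
rewrite infection_term_single.
by case: c0 => [[a b m0 m0'|a b m0|a l0|a l0 l0']|] /=;
  rewrite ?mulr0 ?scale0r ?subr0 ?addr0 ?add0r ?addrA.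
Qed.

Hypotheses (adj_sym : symmetric adj) (adj_irr : irreflexive adj).
Hypothesis e_evec : forall i j, adj i j -> exists m, e j i t = evec R m.
Hypothesis f_evec : forall i, exists l, f i t = evec R l.

Lemma consistent_state_single_jump :
  consistent_state adj (fun j i => xm j i t) (fun i => ym i t) ->
  consistent_state adj (fun j i => xm j i t + jump_x adj N Nm xm ym e j i t)
                       (fun i => ym i t + jump_y adj N Nm xm ym f i t).
Proof.
move=> [Hy Hx].
have infection_bit a b m0 :
    (adj a b)%:R * xm a b t m0 0 = 0 \/ (adj a b)%:R * xm a b t m0 0 = 1.
  case hab: (adj a b); last by left; rewrite mul0r.
  by rewrite mul1r; apply: evec_or0_entry; have [] := Hx b a; rewrite // adj_sym.
split=> [i|i j hij]; rewrite ?jump_x_single jump_y_single.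
  case: c0 dN_single => [[a b m0 m0'|a b m0|a l0|a l0 l0']|] _ //=.
  - have [l ->] := f_evec i.
    by case: (evec_or0_infect (natb_mul_bit (i == a) (infection_bit a b m0))
      (Hy i) (Hy i) erefl (ex_intro _ l erefl) (ex_intro _ l erefl)).
  - exact: evec_or0_clear (natb_mul_bit _ (evec_or0_entry _ (Hy i))) (Hy i).
  - exact: (evec_or0_move _ _ _ (Hy i)).1.
have [hx ho] := Hx i j hij.
case: c0 dN_single => [[a b m0 m0'|a b m0|a l0|a l0 l0']|] _ //=.
- by have [? ->] := evec_or0_move ((j == a) && (i == b) && (m0 != m0')) m0' m0 hx.
- have [Eia|ia] := eqVneq i a.
    subst i; have ja : j != a by apply: contraTneq hij => ->; rewrite (adj_irr a).
    rewrite (negbTE ja) scale0r addr0 mul1r.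
    exact: evec_or0_infect (infection_bit a b m0) hx (Hy a) ho (e_evec hij)
      (f_evec a).
  rewrite mul0r mulr0 !scale0r !addr0.
  have [l ->] := e_evec hij.
  by have [? ->] := evec_or0_restart ((j == a) && (i == b)) m0 l hx.
- have hg := natb_mul_bit (i == a) (evec_or0_entry l0 (Hy i)).
  by split; [exact: evec_or0_clear | rewrite -!scaleNr !ones_dotD !ones_dotZ ho].
- by rewrite (evec_or0_move _ _ _ (Hy i)).2.
Qed.

End SingleJump.

Section RealInduction.
Variable R : realType.
Local Open Scope classical_set_scope.

Lemma nonneg_real_induction (P : R -> Prop) :
  P 0 ->
  (forall t, 0 < t -> (forall r, 0 <= r -> r < t -> P r) -> P t) ->
  (forall t, 0 <= t -> P t ->
     exists2 eps, 0 < eps & forall s, t <= s < t + eps -> P s) ->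
  forall t, 0 <= t -> P t.
Proof.
move=> P0 Pleft Pright t0 t00; apply: contrapT => nPt0.
(* P holds at the supremum [s] of the initial segments of [0, t0] where it
   holds, hence a little beyond [s], which forces [s = t0]. *)
pose B := [set t : R | (0 <= t) && (t <= t0) /\ forall r, 0 <= r -> r <= t -> P r].
have B0 : B 0.
  split=> [|r r0 r0']; first by rewrite lexx t00.
  by have -> : r = 0 by apply/eqP; rewrite eq_le r0 r0'.
have supB : has_sup B by split; [exists 0 | exists t0 => u [/andP[_ ->]]].
set s := sup B.
have s0 : 0 <= s by exact: sup_upper_bound.
have st0 : s <= t0 by apply: ge_sup => [|u [/andP[_ ->]]] //; exists 0.
have below_s r : 0 <= r -> r < s -> P r.
  move=> r0 rs; have sr0 : 0 < s - r by rewrite subr_gt0.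
  have [b [_ Pb] rb] := sup_adherent sr0 supB.
  by apply: Pb => //; apply/ltW; rewrite opprB addrCA subrr addr0 in rb.
have [eps eps0 Peps] : exists2 eps, 0 < eps & forall u, s <= u < s + eps -> P u.
  apply: Pright => //; have [->|sn0] := eqVneq s 0; first exact: P0.
  by apply: Pleft => //; rewrite lt_def sn0 s0.
pose u := Order.min (s + eps / 2) t0.
have [us ut0] : u <= s + eps / 2 /\ u <= t0 by rewrite !ge_min !lexx orbT.
have u0 : 0 <= u by rewrite le_min t00 andbT; lra.
have Bu : B u.
  split=> [|r r0 ru]; first by rewrite u0 ut0.
  have [rs|sr] := ltP r s; first exact: below_s.
  by apply: Peps; apply/andP; split; lra.
have : u <= s by exact: sup_upper_bound.
rewrite ge_min => /orP[|t0s]; first by move=> ?; lra.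
apply: nPt0; have -> : t0 = s by apply/eqP; rewrite eq_le t0s st0.
by apply: Peps; apply/andP; split; lra.
Qed.

Lemma left_values_common (V W : Type) (Z1 : R -> V) (Z2 : R -> W) t v w :
  0 < t -> left_value Z1 t v -> left_value Z2 t w ->
  exists r, [/\ 0 <= r, r < t, Z1 r = v & Z2 r = w].
Proof.
move=> t0 [e1 e10 H1] [e2 e20 H2].
pose m := Order.min (Order.min e1 e2) t.
have [me1 me2] : m <= e1 /\ m <= e2 by rewrite !ge_min !lexx !orbT.
have [mt m0] : m <= t /\ 0 < m by rewrite ge_min lexx orbT !lt_min e10 e20 t0.
exists (t - m / 2); split; [lra | lra | apply: H1 | apply: H2].
  all: by apply/andP; split; lra.
Qed.

Lemma finite_right_window (I : finType) (P : I -> R -> Prop) t :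
  (forall i, exists2 eps, 0 < eps & forall s, t <= s < t + eps -> P i s) ->
  exists2 eps, 0 < eps & forall i s, t <= s < t + eps -> P i s.
Proof.
move=> Pwin; suff [eps eps0 Peps] : exists2 eps, 0 < eps &
    forall i, i \in enum I -> forall s, t <= s < t + eps -> P i s.
  by exists eps => // i; apply: Peps; rewrite mem_enum.
elim: (enum I) => [|a s [eps eps0 Peps]]; first by exists 1.
have [ea ea0 Pa] := Pwin a.
exists (Order.min eps ea) => [|i]; first by rewrite lt_min eps0 ea0.
have [le_eps le_ea] : Order.min eps ea <= eps /\ Order.min eps ea <= ea.
  by rewrite !ge_min !lexx orbT.
rewrite inE => /orP[/eqP-> | si] u /andP[tu ut];
  [apply: Pa | apply: Peps] => //; apply/andP; split; lra.
Qed.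

End RealInduction.

Lemma counting_path_jump (R : realType) (N Nm : R -> nat) t :
  counting_path N Nm -> 0 < t -> N t = Nm t \/ N t = (Nm t).+1.
Proof.
case=> _ Nmono _ Nleft t0; have [Nl Nle] := Nleft t t0.
have [r [r0 rt Nr _]] := left_values_common t0 Nl Nl.
have : (Nm t <= N t)%N by rewrite -Nr; apply: Nmono => //; exact: ltW.
rewrite leq_eqVlt => /orP[/eqP Nt|lt]; first by left.
by right; apply/eqP; rewrite eqn_leq Nle lt.
Qed.

Lemma dN_single_jump (R : realType) n p q (T : 'M[R]_p) (Rq : 'M[R]_q)
    (N Nm : counter n p q -> R -> nat) t :
  poisson_paths T Rq N Nm -> 0 < t ->
  forall c, dN N Nm c t = (Some c == [pick c | N c t != Nm c t])%:R.
Proof.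
case=> paths _ simultaneous t0 c; rewrite /dN.
case: pickP => [c' jump_c'|no_jump]; last first.
  by move/eqP: (negbFE (no_jump c)) ->; rewrite subrr.
rewrite (_ : (Some c == Some c') = (c == c')) //.
have [->|cc'] := eqVneq c c'.
  case: (counting_path_jump (paths c') t0) => [Nc|->].
    by rewrite Nc eqxx in jump_c'.
  by rewrite -addn1 natrD addrAC subrr add0r.
have [->|jump_c] := eqVneq (N c t) (Nm c t); first by rewrite subrr.
by case/eqP: cc'; apply: simultaneous t0 (elimN eqP jump_c) (elimN eqP jump_c').
Qed.

Section SolutionPaths.
Variables (R : realType) (n p q : nat) (adj : rel 'I_n).
Variables (N Nm : counter n p q -> R -> nat).
Variables (x xm : 'I_n -> 'I_n -> R -> 'cV[R]_p) (y ym : 'I_n -> R -> 'cV[R]_q).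
Hypothesis x_pc : forall i j, adj i j -> pc_process N Nm (x j i) (xm j i).
Hypothesis y_pc : forall i, pc_process N Nm (y i) (ym i).

Local Notation state_at t :=
  (consistent_state adj (fun j i => x j i t) (fun i => y i t)).

Lemma consistent_state_left_limit t : 0 < t ->
  (forall r, 0 <= r -> r < t -> state_at r) ->
  consistent_state adj (fun j i => xm j i t) (fun i => ym i t).
Proof.
move=> t0 before_t; split=> [i|i j hij].
  have [_ _ y_left] := y_pc i.
  have [r [r0 rt <- _]] := left_values_common t0 (y_left t t0) (y_left t t0).
  by have [] := before_t r r0 rt.
have [_ _ y_left] := y_pc i; have [_ _ x_left] := x_pc hij.
have [r [r0 rt <- <-]] := left_values_common t0 (x_left t t0) (y_left t t0).
by have [_] := before_t r r0 rt; apply.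
Qed.

Lemma consistent_state_right t : 0 <= t -> state_at t ->
  exists2 eps, 0 < eps & forall s, t <= s < t + eps -> state_at s.
Proof.
move=> t0 [Hy Hx].
pose frozen (k : 'I_n + 'I_n * 'I_n) s := match k with
  | inl i => y i s = y i t
  | inr (i, j) => adj i j -> x j i s = x j i t
  end.
have [eps eps0 Heps] : exists2 eps, 0 < eps &
    forall k s, t <= s < t + eps -> frozen k s.
  apply: finite_right_window => -[i|[i j]] /=.
    by have [y_right _ _] := y_pc i; exact: y_right.
  case hij: (adj i j); last by exists 1.
  have [x_right _ _] := x_pc hij; have [eps eps0 x_const] := x_right t t0.
  by exists eps => // s /x_const.
exists eps => // s ts; split=> [i|i j hij].
  by rewrite (Heps (inl i) s).
by rewrite (Heps (inr (i, j)) s) // (Heps (inl i) s) //; exact: Hx.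
Qed.

End SolutionPaths.

Lemma consistent_state_init (R : realType) n p q (adj : rel 'I_n)
    (phi : 'I_p -> R) (psi : 'I_q -> R) (Lambda : {set 'I_n})
    (X : 'I_n -> 'I_n -> 'cV[R]_p) (Y : 'I_n -> 'cV[R]_q) :
  (forall i, i \in Lambda ->
     (forall j, adj i j -> exists2 m, 0 < phi m & X j i = evec R m) /\
     exists2 l, 0 < psi l & Y i = evec R l) ->
  (forall i, i \notin Lambda -> (forall j, adj i j -> X j i = 0) /\ Y i = 0) ->
  consistent_state adj X Y.
Proof.
move=> infected healthy; split=> [i|i j hij]; case: (boolP (i \in Lambda)) => iL.
- by have [_ [l _ ->]] := infected i iL; right; exists l.
- by have [_ ->] := healthy i iL; left.
- have [Xi [l _ ->]] := infected i iL; have [m _ ->] := Xi j hij.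
  by rewrite !ones_dot_evec; split=> //; right; exists m.
- by have [-> // ->] := healthy i iL; rewrite !ones_dot0; split=> //; left.
Qed.

Theorem lemma3 (R : realType) (n p q : nat)
  (T : 'M[R]_p) (Rq : 'M[R]_q) (phi : 'I_p -> R) (psi : 'I_q -> R)
  (adj : rel 'I_n) (Lambda : {set 'I_n})
  (N Nm : counter n p q -> R -> nat)
  (e : 'I_n -> 'I_n -> R -> 'cV[R]_p) (f : 'I_n -> R -> 'cV[R]_q)
  (x xm : 'I_n -> 'I_n -> R -> 'cV[R]_p) (y ym : 'I_n -> R -> 'cV[R]_q) :
  (* parameters *)
  metzler T -> nonpos_rowsums T -> T \in unitmx ->
  metzler Rq -> nonpos_rowsums Rq -> Rq \in unitmx ->
  prob_vec phi -> prob_vec psi ->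
  (* undirected graph, every node has a neighbour *)
  symmetric adj -> irreflexive adj -> (forall i, exists j, adj i j) ->
  (* sample paths of the Poisson counters and auxiliary processes *)
  poisson_paths T Rq N Nm ->
  (forall i j t, adj i j -> 0 <= t -> exists2 m, 0 < phi m & e j i t = evec R m) ->
  (forall i t, 0 <= t -> exists2 l, 0 < psi l & f i t = evec R l) ->
  (* initial conditions *)
  (forall i, i \in Lambda ->
     (forall j, adj i j -> exists2 m, 0 < phi m & x j i 0 = evec R m) /\
     exists2 l, 0 < psi l & y i 0 = evec R l) ->
  (forall i, i \notin Lambda ->
     (forall j, adj i j -> x j i 0 = 0) /\ y i 0 = 0) ->
  (* (x, y) solves (SDE-x), (SDE-y) *)
  is_solution adj N Nm x xm y ym e f ->
  forall i j t, adj i j -> 0 <= t ->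
    [/\ ones_dot (x j i t) = ones_dot (y i t),
        x j i t = 0 \/ (exists m, x j i t = evec R m) &
        y i t = 0 \/ (exists l, y i t = evec R l)].
Proof.
move=> _ _ _ _ _ _ _ _ adj_sym adj_irr _ paths e_evec f_evec infected healthy
  [x_pc y_pc x_jump y_jump] i j t hij t0.
suff [Hy Hx] : consistent_state adj (fun j i => x j i t) (fun i => y i t).
  by have [? ?] := Hx i j hij; split=> //; exact: Hy.
move: t t0; apply: nonneg_real_induction => [|s s0 before_s|s s0].
- exact: consistent_state_init infected healthy.
- have e_s k l : adj k l -> exists m, e l k s = evec R m.
    by move=> hkl; have [m _ ->] := e_evec k l s hkl (ltW s0); exists m.
  have f_s k : exists l, f k s = evec R l.
    by have [l _ ->] := f_evec k s (ltW s0); exists l.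
  have [Hy Hx] := consistent_state_single_jump (dN_single_jump paths s0)
    adj_sym adj_irr e_s f_s (consistent_state_left_limit x_pc y_pc s0 before_s).
  split=> [k|k l hkl]; first by rewrite y_jump //; exact: Hy.
  by rewrite x_jump // y_jump //; exact: Hx.
- by move=> /(consistent_state_right x_pc y_pc s0).
Qed.
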